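(* $\mathcal{RD}_{\text{EGC*}}=\mathcal{RD}_{\text{EGC}}$.
   Context: Let $\mathcal{X}$ and $\hat{\mathcal{X}}$ be finite sets, $p_X$ a distribution on $\mathcal{X}$, $X$ a random variable with distribution $p_X$, and $d:\mathcal{X}\times\hat{\mathcal{X}}\to[0,\infty)$ a distortion measure. All auxiliary random variables below take values in finite sets. The EGC* region $\mathcal{RD}_{\text{EGC*}}$ is the convex closure of the set of quintuples $(R_1,R_2,D_{\{1\}},D_{\{2\}},D_{\{1,2\}})$ for which there exist auxiliary random variables $X_{\{1\}}$ and $X_{\{2\}}$, jointly distributed with $X$, and functions $\phi_{\{1\}},\phi_{\{2\}},\phi_{\{1,2\}}$ with values in $\hat{\mathcal{X}}$, such that $R_k\ge I(X;X_{\{k\}})$ for $k\in\{1,2\}$; $R_1+R_2\ge I(X;X_{\{1\}},X_{\{2\}})+I(X_{\{1\}};X_{\{2\}})$; $D_{\{k\}}\ge \mathbb{E}[d(X,\phi_{\{k\}}(X_{\{k\}}))]$ for $k\in\{1,2\}$; $D_{\{1,2\}}\ge\mathbb{E}[d(X,\phi_{\{1,2\}}(X_{\{1\}},X_{\{2\}}))]$. The EGC region $\mathcal{RD}_{\text{EGC}}$ is the convex closure of the set of quintuples $(R_1,R_2,D_{\{1\}},D_{\{2\}},D_{\{1,2\}})$ for which there exist random variables $X_{\{1\}},X_{\{2\}},X_{\{1,2\}}$ taking values in $\hat{\mathcal{X}}$, jointly distributed with $X$, such that $R_k\ge I(X;X_{\{k\}})$ for $k\in\{1,2\}$; $R_1+R_2\ge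 I(X;X_{\{1\}},X_{\{2\}},X_{\{1,2\}})+I(X_{\{1\}};X_{\{2\}})$; $D_{\mathcal{K}}\ge\mathbb{E}[d(X,X_{\mathcal{K}})]$ for $\mathcal{K}\in\{\{1\},\{2\},\{1,2\}\}$. *)

From mathcomp Require Import all_boot all_order all_algebra.
From mathcomp Require Import reals exp.
Set Implicit Arguments. Unset Strict Implicit. Unset Printing Implicit Defensive.
Import Order.TTheory GRing.Theory Num.Theory.
Local Open Scope ring_scope.

Definition is_pmf {R : realType} {T : finType} (P : T -> R) : Prop :=
  (forall t, 0 <= P t) /\ \sum_(t : T) P t = 1.

Definition mutinf {R : realType} {Om A B : finType} (P : Om -> R)
  (f : Om -> A) (g : Om -> B) : R :=
  \sum_(a : A) \sum_(b : B)
    let pab := \sum_(w | (f w == a) && (g w == b)) P w in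
    let pa := \sum_(w | f w == a) P w in
    let pb := \sum_(w | g w == b) P w in
    if pab == 0 then 0 else pab * ln (pab / (pa * pb)).

Definition expect {R : realType} {Om : finType} (P : Om -> R) (h : Om -> R) : R :=
  \sum_(w : Om) P w * h w.

Definition has_law {R : realType} {Om T : finType} (P : Om -> R) (Xv : Om -> T)
  (pX : T -> R) : Prop :=
  forall x, \sum_(w | Xv w == x) P w = pX x.

(* quintuples (R1,R2,D{1},D{2},D{1,2}) are row vectors of size 5 *)
Definition coord {R : realType} (r : 'rV[R]_5) (k : nat) : R := r ord0 (inord k).

Definition EGCstar_pre {R : realType} {X Xh : finType} (pX : X -> R)
  (d : X -> Xh -> R) (r : 'rV[R]_5) : Prop :=
  exists (Om U1 U2 : finType) (P : Om -> R) (Xv : Om -> X)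
         (X1 : Om -> U1) (X2 : Om -> U2)
         (phi1 : U1 -> Xh) (phi2 : U2 -> Xh) (phi12 : U1 -> U2 -> Xh),
    [/\ is_pmf P, has_law P Xv pX,
        [/\ coord r 0 >= mutinf P Xv X1,
            coord r 1 >= mutinf P Xv X2 &
            coord r 0 + coord r 1 >=
              mutinf P Xv (fun w => (X1 w, X2 w)) + mutinf P X1 X2] &
        [/\ coord r 2 >= expect P (fun w => d (Xv w) (phi1 (X1 w))),
            coord r 3 >= expect P (fun w => d (Xv w) (phi2 (X2 w))) &
            coord r 4 >= expect P (fun w => d (Xv w) (phi12 (X1 w) (X2 w)))]].

Definition EGC_pre {R : realType} {X Xh : finType} (pX : X -> R)
  (d : X -> Xh -> R) (r : 'rV[R]_5) : Prop :=
  exists (Om : finType) (P : Om -> R) (Xv : Om -> X)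
         (X1 X2 X12 : Om -> Xh),
    [/\ is_pmf P, has_law P Xv pX,
        [/\ coord r 0 >= mutinf P Xv X1,
            coord r 1 >= mutinf P Xv X2 &
            coord r 0 + coord r 1 >=
              mutinf P Xv (fun w => (X1 w, X2 w, X12 w)) + mutinf P X1 X2] &
        [/\ coord r 2 >= expect P (fun w => d (Xv w) (X1 w)),
            coord r 3 >= expect P (fun w => d (Xv w) (X2 w)) &
            coord r 4 >= expect P (fun w => d (Xv w) (X12 w))]].

Definition conv_hull {R : realType} (S : 'rV[R]_5 -> Prop) (r : 'rV[R]_5) : Prop :=
  exists (n : nat) (w : 'I_n -> R) (v : 'I_n -> 'rV[R]_5),
    [/\ forall i, 0 <= w i, \sum_i w i = 1, forall i, S (v i) &
        r = \sum_i w i *: v i].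

Definition conv_closure {R : realType} (S : 'rV[R]_5 -> Prop) (r : 'rV[R]_5) : Prop :=
  forall eps : R, 0 < eps ->
    exists y, conv_hull S y /\ forall k : 'I_5, `|r ord0 k - y ord0 k| < eps.

Definition RD_EGCstar {R : realType} {X Xh : finType} (pX : X -> R)
  (d : X -> Xh -> R) := conv_closure (EGCstar_pre pX d).
Definition RD_EGC {R : realType} {X Xh : finType} (pX : X -> R)
  (d : X -> Xh -> R) := conv_closure (EGC_pre pX d).

From Pilot Require Import Defs.
From mathcomp Require Import all_boot all_order all_algebra.
From mathcomp Require Import reals exp.
From mathcomp Require Import ring lra.
Import Order.TTheory GRing.Theory Num.Theory.
Local Open Scope ring_scope.

(* EGC* is contained in EGC: the reproductions phi_1(U1), phi_2(U2) and
   phi_{1,2}(U1, U2) of EGC* auxiliaries U1, U2 satisfy the EGC constraints by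
   data processing.

   Conversely, take an EGC tuple (X, A1, A2, B) and let V be a random function on
   Xh * Xh with V (A1, A2) = B almost surely but V independent of (A1, A2).  For
   U1 := A1 and U2 := (A2, V), reconstructing B as V (U1, A2), the independence gives
   I(X; U1, U2) + I(U1; U2) <= I(X; A1, A2, B) + I(A1; A2) =: c, while always
   I(X; U1) + I(X; U2) <= I(X; U1, U2) + I(U1; U2).  Hence the corner
   (I(X; A1), c - I(X; A1)) of the EGC rate pentagon, and symmetrically the other
   corner, lies in EGC*; every EGC point is a convex combination of two such corners
   with the same sum rate and distortions, and convex closures preserve this. *)

Section Entropy.
Context {R : realType}.
Implicit Types (Om A B C : finType).

Definition law {Om A} (P : Om -> R) (f : Om -> A) (a : A) : R :=
  \sum_(w | f w == a) P w.

Definition entropy {Om A} (P : Om -> R) (f : Om -> A) : R :=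
  - \sum_a law P f a * ln (law P f a).

Lemma sum_fibers {Om A} (f : Om -> A) (F : Om -> A -> R) :
  \sum_a \sum_(w | f w == a) F w a = \sum_w F w (f w).
Proof.
under eq_bigr do rewrite big_mkcond.
rewrite exchange_big; apply: eq_bigr => w _ /=.
by rewrite -big_mkcond (big_pred1 (f w)) // => a /=; rewrite eq_sym.
Qed.

Lemma expect_law {Om A} (P : Om -> R) (f : Om -> A) (F : A -> R) :
  \sum_w P w * F (f w) = \sum_a law P f a * F a.
Proof.
rewrite -(sum_fibers f (fun w a => P w * F a)).
by apply: eq_bigr => a _; rewrite big_distrl.
Qed.

Lemma sum_law {Om A} (P : Om -> R) (f : Om -> A) :
  \sum_a law P f a = \sum_w P w.
Proof. exact: (sum_fibers f (fun w _ => P w)). Qed.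

Lemma entropyE {Om A} (P : Om -> R) (f : Om -> A) :
  entropy P f = - \sum_w P w * ln (law P f (f w)).
Proof. by rewrite /entropy (expect_law P f (fun a => ln (law P f a))). Qed.

Lemma eq_entropy {Om A B} (P : Om -> R) (f : Om -> A) (g : Om -> B) :
  (forall w w', P w != 0 -> P w' != 0 -> (f w == f w') = (g w == g w')) ->
  entropy P f = entropy P g.
Proof.
move=> fg; rewrite !entropyE; congr (- _); apply: eq_bigr => w _.
have [->|Pw] := eqVneq (P w) 0; first by rewrite !mul0r.
congr (_ * ln _); rewrite /law [LHS]big_mkcond [RHS]big_mkcond.
apply: eq_bigr => w' _.
have [->|Pw'] := eqVneq (P w') 0; first by rewrite !if_same.
by rewrite (fg w' w Pw' Pw).
Qed.

Lemma law_pairl {Om A B} (P : Om -> R) (f : Om -> A) (g : Om -> B) a :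
  \sum_b law P (fun w => (f w, g w)) (a, b) = law P f a.
Proof.
rewrite [RHS]big_mkcond -(sum_fibers g (fun w _ => if f w == a then P w else 0)).
apply: eq_bigr => b _; rewrite -big_mkcondr.
by apply: eq_bigl => w; rewrite xpair_eqE andbC.
Qed.

Lemma law_pairr {Om A B} (P : Om -> R) (f : Om -> A) (g : Om -> B) b :
  \sum_a law P (fun w => (f w, g w)) (a, b) = law P g b.
Proof.
rewrite [RHS]big_mkcond -(sum_fibers f (fun w _ => if g w == b then P w else 0)).
by apply: eq_bigr => a _; rewrite -big_mkcondr.
Qed.

Lemma entropy_pairC {Om A B} (P : Om -> R) (f : Om -> A) (g : Om -> B) :
  entropy P (fun w => (f w, g w)) = entropy P (fun w => (g w, f w)).
Proof. by apply: eq_entropy => w w' _ _; rewrite !xpair_eqE andbC. Qed.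

Section ProbabilitySpace.
Context {Om : finType} (P : Om -> R).
Hypotheses (P_ge0 : forall w, 0 <= P w) (P_sum1 : \sum_w P w = 1).

Lemma law_ge0 {A} (f : Om -> A) a : 0 <= law P f a.
Proof. exact: sumr_ge0. Qed.

Lemma le_law {A} (f : Om -> A) w : P w <= law P f (f w).
Proof. by rewrite /law (bigD1 w) //= lerDl sumr_ge0. Qed.

Lemma law_gt0 {A} (f : Om -> A) w : P w != 0 -> 0 < law P f (f w).
Proof. by move=> Pw; rewrite (lt_le_trans _ (le_law f w)) // lt0r Pw P_ge0. Qed.

Lemma law_pair_lel {A B} (f : Om -> A) (g : Om -> B) a b :
  law P (fun w => (f w, g w)) (a, b) <= law P f a.
Proof.
by rewrite -(law_pairl P f g) (bigD1 b) //= lerDl sumr_ge0 // => *; apply: law_ge0.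
Qed.

Lemma law_pair_ler {A B} (f : Om -> A) (g : Om -> B) a b :
  law P (fun w => (f w, g w)) (a, b) <= law P g b.
Proof.
by rewrite -(law_pairr P f g) (bigD1 a) //= lerDl sumr_ge0 // => *; apply: law_ge0.
Qed.

Lemma mutinfE {A B} (f : Om -> A) (g : Om -> B) :
  mutinf P f g = entropy P f + entropy P g - entropy P (fun w => (f w, g w)).
Proof.
set fg := fun w => (f w, g w).
have term a b :
  (let pab := \sum_(w | (f w == a) && (g w == b)) P w in
   let pa := \sum_(w | f w == a) P w in
   let pb := \sum_(w | g w == b) P w in
   if pab == 0 then 0 else pab * ln (pab / (pa * pb))) =
  law P fg (a, b) * ln (law P fg (a, b)) - law P fg (a, b) * ln (law P f a)
    - law P fg (a, b) * ln (law P g b).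
  rewrite /= -/(law P f a) -/(law P g b).
  have -> : \sum_(w | (f w == a) && (g w == b)) P w = law P fg (a, b).
    by apply: eq_bigl => w; rewrite xpair_eqE.
  have [->|pab_neq0] := eqVneq (law P fg (a, b)) 0.
    by rewrite !mul0r !subrr.
  have pab_gt0 : 0 < law P fg (a, b) by rewrite lt0r pab_neq0 law_ge0.
  have pa_gt0 := lt_le_trans pab_gt0 (law_pair_lel f g a b).
  have pb_gt0 := lt_le_trans pab_gt0 (law_pair_ler f g a b).
  rewrite ln_div ?posrE ?mulr_gt0 // lnM ?posrE //; ring.
rewrite /mutinf (eq_bigr _ (fun a _ => eq_bigr _ (fun b _ => term a b))).
under eq_bigr do rewrite !sumrB.
rewrite !sumrB /entropy pair_bigA /=.
under [X in _ - X - _]eq_bigr do rewrite -big_distrl law_pairl.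
rewrite exchange_big /=.
under [X in _ - X]eq_bigr do rewrite -big_distrl law_pairr.
have -> : \sum_p law P fg (p.1, p.2) * ln (law P fg (p.1, p.2)) =
          \sum_p law P fg p * ln (law P fg p) by apply: eq_bigr => -[].
ring.
Qed.

Lemma gibbs_ineq (s t : Om -> R) :
  (forall w, P w != 0 -> 0 < s w /\ 0 < t w) ->
  \sum_w P w * (t w / s w) <= 1 ->
  \sum_w P w * ln (t w) <= \sum_w P w * ln (s w).
Proof.
move=> st_gt0 sum_le1; rewrite -subr_le0 -sumrB.
apply: (@le_trans _ _ (\sum_w P w * (t w / s w - 1))).
  apply: ler_sum => w _.
  have [->|Pw] := eqVneq (P w) 0; first by rewrite !mul0r subrr.
  have [s_gt0 t_gt0] := st_gt0 w Pw.
  rewrite -mulrBr ler_wpM2l // -ln_div ?posrE //.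
  have := @le_ln1Dx R (t w / s w - 1); rewrite addrCA subrr addr0; apply.
  by rewrite ltrBrDl subrr divr_gt0.
rewrite (eq_bigr (fun w => P w * (t w / s w) - P w)) => [|w _]; last first.
  by rewrite mulrBr mulr1.
by rewrite sumrB P_sum1 subr_le0.
Qed.

Lemma entropy_submod {A B C} (a : Om -> A) (b : Om -> B) (c : Om -> C) :
  entropy P (fun w => (a w, b w, c w)) + entropy P c <=
  entropy P (fun w => (a w, c w)) + entropy P (fun w => (b w, c w)).
Proof.
set pabc := law P (fun w => (a w, b w, c w)).
set pac := law P (fun w => (a w, c w)).
set pbc := law P (fun w => (b w, c w)).
set pc := law P c.
have lnM_laws w (p q : R) : P w != 0 -> 0 < p -> 0 < q ->
    P w * ln (p * q) = P w * ln p + P w * ln q.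
  by move=> _ p_gt0 q_gt0; rewrite lnM ?posrE // mulrDr.
rewrite !entropyE -!opprD lerN2 -!big_split /=.
rewrite (eq_bigr (fun w => P w * ln (pac (a w, c w) * pbc (b w, c w)))); last first.
  move=> w _; have [->|Pw] := eqVneq (P w) 0; first by rewrite !mul0r addr0.
  by rewrite lnM_laws // law_gt0.
rewrite [leRHS](eq_bigr (fun w => P w * ln (pabc (a w, b w, c w) * pc (c w))));
  last first.
  move=> w _; have [->|Pw] := eqVneq (P w) 0; first by rewrite !mul0r addr0.
  by rewrite lnM_laws // law_gt0.
apply: gibbs_ineq => [w Pw|].
  by split; apply: mulr_gt0; apply: law_gt0.
rewrite (expect_law P (fun w => (a w, b w, c w))
  (fun y => pac (y.1.1, y.2) * pbc (y.1.2, y.2) / (pabc y * pc y.2))).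
apply: (@le_trans _ _ (\sum_y pac (y.1.1, y.2) * pbc (y.1.2, y.2) / pc y.2)).
  apply: ler_sum => y _; rewrite -/pabc.
  have [->|pabc_neq0] := eqVneq (pabc y) 0.
    by rewrite mul0r divr_ge0 ?mulr_ge0 ?law_ge0.
  by rewrite invfM mulrCA (mulrA (pabc y)) divff // mul1r.
rewrite -(pair_bigA _ (fun ab z => pac (ab.1, z) * pbc (ab.2, z) / pc z)).
rewrite exchange_big /=.
rewrite -P_sum1 -(sum_law P c); apply: ler_sum => z _.
rewrite -(pair_bigA _ (fun x y => pac (x, z) * pbc (y, z) / pc z)) /=.
under eq_bigr do under eq_bigr do rewrite mulrAC.
under eq_bigr do rewrite -big_distrr /= law_pairr.
rewrite -!big_distrl /= /pac law_pairr /pc.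
have [->|pz] := eqVneq (law P c z) 0; first by rewrite mulr0.
by rewrite divff // mul1r.
Qed.

Lemma entropy_cst {A} (a : A) : entropy P (fun _ => a) = 0.
Proof.
rewrite entropyE /law (eq_bigl xpredT) ?eqxx // P_sum1 ln1.
by rewrite big1 ?oppr0 // => w _; rewrite mulr0.
Qed.

Lemma entropy_subadd {A B} (a : Om -> A) (b : Om -> B) :
  entropy P (fun w => (a w, b w)) <= entropy P a + entropy P b.
Proof.
have := entropy_submod a b (fun _ => tt); rewrite entropy_cst addr0.
have drop_tt (C : finType) (c : Om -> C) :
    entropy P (fun w => (c w, tt)) = entropy P c.
  by apply: eq_entropy => w w' _ _; rewrite xpair_eqE eqxx andbT.
by rewrite !drop_tt.
Qed.

Lemma mutinfC {A B} (a : Om -> A) (b : Om -> B) : mutinf P a b = mutinf P b a.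
Proof. by rewrite !mutinfE (entropy_pairC P a b); ring. Qed.

Lemma eq_mutinfr {A B B'} (a : Om -> A) (b : Om -> B) (b' : Om -> B') :
  (forall w w', (b w == b w') = (b' w == b' w')) -> mutinf P a b = mutinf P a b'.
Proof.
move=> bb'; rewrite !mutinfE; congr (_ + _ - _); apply: eq_entropy => w w' _ _.
  exact: bb'.
by rewrite !xpair_eqE bb'.
Qed.

Lemma mutinf_mapr_le {A B C} (a : Om -> A) (b : Om -> B) (u : B -> C) :
  mutinf P a (fun w => u (b w)) <= mutinf P a b.
Proof.
rewrite !mutinfE; have := entropy_submod a b (fun w => u (b w)).
have -> : entropy P (fun w => (a w, b w, u (b w))) =
          entropy P (fun w => (a w, b w)).
  apply: eq_entropy => w w' _ _; rewrite !xpair_eqE.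
  by case: (b w =P b w') => [->|]; rewrite ?eqxx ?andbT ?andbF.
have -> : entropy P (fun w => (b w, u (b w))) = entropy P b.
  apply: eq_entropy => w w' _ _; rewrite !xpair_eqE.
  by case: (b w =P b w') => [->|]; rewrite ?eqxx.
move=> h; lra.
Qed.

Lemma mutinf_map_le {A B C D : finType} (a : Om -> A) (b : Om -> B)
    (u : A -> C) (v : B -> D) :
  mutinf P (fun w => u (a w)) (fun w => v (b w)) <= mutinf P a b.
Proof.
apply: le_trans (mutinf_mapr_le _ _ _) _.
by rewrite mutinfC (mutinfC a); apply: mutinf_mapr_le.
Qed.

Lemma mutinf_add_le {A B C} (x : Om -> A) (b : Om -> B) (c : Om -> C) :
  mutinf P x b + mutinf P x c <= mutinf P x (fun w => (b w, c w)) + mutinf P b c.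
Proof.
rewrite !mutinfE; have := entropy_submod b c x.
have -> : entropy P (fun w => (b w, c w, x w)) =
          entropy P (fun w => (x w, (b w, c w))).
  by apply: eq_entropy => w w' _ _; rewrite !xpair_eqE andbC.
rewrite (entropy_pairC P b) (entropy_pairC P c) => h; lra.
Qed.

Lemma entropy_indep {A B} (a : Om -> A) (b : Om -> B) :
  (forall x y, law P (fun w => (a w, b w)) (x, y) = law P a x * law P b y) ->
  entropy P (fun w => (a w, b w)) = entropy P a + entropy P b.
Proof.
move=> law_ab; rewrite !entropyE -opprD -big_split /=; congr (- _).
apply: eq_bigr => w _; rewrite law_ab.
have [->|Pw] := eqVneq (P w) 0; first by rewrite !mul0r addr0.
by rewrite lnM ?posrE ?law_gt0 // mulrDr.
Qed.

End ProbabilitySpace.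
End Entropy.

Lemma sum_pair {R : realType} {I J : finType} (F : I * J -> R) :
  \sum_p F p = \sum_i \sum_j F (i, j).
Proof. by rewrite pair_bigA; apply: eq_bigr => -[]. Qed.

Section KernelExtension.
Context {R : realType} {Om C V : finType}.
Variables (P : Om -> R) (kap : C -> V -> R) (c : Om -> C).
Hypotheses (P_ge0 : forall w, 0 <= P w) (kap_ge0 : forall x v, 0 <= kap x v)
  (kap_sum1 : forall x, \sum_v kap x v = 1).

Definition kernel_ext (p : Om * V) : R := P p.1 * kap (c p.1) p.2.

Definition kernel_condent : R :=
  - \sum_w P w * \sum_v kap (c w) v * ln (kap (c w) v).

Lemma kernel_ext_ge0 p : 0 <= kernel_ext p.
Proof. exact: mulr_ge0. Qed.

Lemma kernel_ext_marg w : \sum_v kernel_ext (w, v) = P w.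
Proof. by rewrite /kernel_ext /= -big_distrr /= kap_sum1 mulr1. Qed.

Lemma kernel_ext_expect (h : Om -> R) :
  \sum_p kernel_ext p * h p.1 = \sum_w P w * h w.
Proof.
rewrite sum_pair; apply: eq_bigr => w _ /=.
by rewrite -big_distrl /= kernel_ext_marg.
Qed.

Lemma kernel_ext_law {A : finType} (f : Om -> A) a :
  law kernel_ext (fun p => f p.1) a = law P f a.
Proof.
rewrite /law big_mkcond sum_pair [RHS]big_mkcond; apply: eq_bigr => w _ /=.
by case: (f w == a); rewrite ?kernel_ext_marg // big1.
Qed.

Lemma kernel_ext_entropy {A : finType} (f : Om -> A) :
  entropy kernel_ext (fun p => f p.1) = entropy P f.
Proof.
rewrite !entropyE; under eq_bigr do rewrite kernel_ext_law.
by rewrite (kernel_ext_expect (fun w => ln (law P f (f w)))).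
Qed.

Lemma kernel_ext_entropy_pair {A : finType} (f : Om -> A) (h : A -> C) :
  (forall w, c w = h (f w)) ->
  entropy kernel_ext (fun p => (f p.1, p.2)) = entropy P f + kernel_condent.
Proof.
move=> c_f.
have law_fV a v :
    law kernel_ext (fun p => (f p.1, p.2)) (a, v) = law P f a * kap (h a) v.
  rewrite /law big_mkcond sum_pair big_distrl /= [RHS]big_mkcond.
  apply: eq_bigr => w _ /=.
  rewrite (bigD1 v) //= big1 => [|v' /negbTE v'v]; last first.
    by rewrite xpair_eqE v'v andbF.
  rewrite addr0 xpair_eqE eqxx andbT; case: eqP => [<-|_] //.
  by rewrite /kernel_ext /= c_f.
have -> : kernel_condent = - \sum_p kernel_ext p * ln (kap (c p.1) p.2).
  rewrite sum_pair; congr (- _); apply: eq_bigr => w _; rewrite big_distrr.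
  by apply: eq_bigr => v _; rewrite /kernel_ext /= mulrA.
rewrite !entropyE -(kernel_ext_expect (fun w => ln (law P f (f w)))).
rewrite -opprD -big_split.
congr (- _); apply: eq_bigr => -[w v] _ /=; rewrite law_fV -c_f.
have [->|p_neq0] := eqVneq (kernel_ext (w, v)) 0; first by rewrite !mul0r addr0.
have Pw_gt0 : 0 < P w.
  rewrite lt0r P_ge0 andbT; apply: contraNneq p_neq0 => Pw0.
  by rewrite /kernel_ext /= Pw0 mul0r.
have kap_gt0 : 0 < kap (c w) v.
  rewrite lt0r kap_ge0 andbT; apply: contraNneq p_neq0 => kap0.
  by rewrite /kernel_ext /= kap0 mulr0.
have f_gt0 : 0 < law P f (f w) by rewrite law_gt0 // gt_eqF.
by rewrite lnM ?posrE // mulrDr.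
Qed.

End KernelExtension.

Section RandomFunction.
Context {R : realType} {Om X Xh : finType}.
Variables (P : Om -> R) (Xv : Om -> X) (A1 A2 B : Om -> Xh) (b0 : Xh).
Hypotheses (P_ge0 : forall w, 0 <= P w) (P_sum1 : \sum_w P w = 1).

Local Notation V := {ffun Xh * Xh -> Xh}.

Let law_A := law P (fun w => (A1 w, A2 w)).
Let law_AB := law P (fun w => (A1 w, A2 w, B w)).

Definition condB (a : Xh * Xh) (b : Xh) : R :=
  if law_A a == 0 then (b == b0)%:R else law_AB (a, b) / law_A a.

(* Given (A1, A2, B) = (a, b), the random function V has V a = b and independent
   values V a' at a' != a, distributed as B given (A1, A2) = a'.  Hence
   V (A1, A2) = B almost surely while V is independent of (A1, A2). *)
Definition fun_kernel (ab : Xh * Xh * Xh) (v : V) : R :=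
  \prod_a (if a == ab.1 then (v a == ab.2)%:R else condB a (v a)).

Definition law_V (v : V) : R := \prod_a condB a (v a).

Definition PV := kernel_ext P fun_kernel (fun w => (A1 w, A2 w, B w)).

Lemma sum_indicator (b : Xh) : \sum_y ((y == b)%:R : R) = 1.
Proof. by rewrite (bigD1 b) //= eqxx big1 ?addr0 // => y /negbTE ->. Qed.

Lemma condB_ge0 a b : 0 <= condB a b.
Proof. by rewrite /condB; case: ifP; rewrite ?ler0n ?divr_ge0 ?law_ge0. Qed.

Lemma condB_sum1 a : \sum_b condB a b = 1.
Proof.
rewrite /condB; case: eqP => [_|/eqP law_A_neq0]; first exact: sum_indicator.
by rewrite -big_distrl /= law_pairl divff.
Qed.

Lemma fun_kernel_ge0 ab v : 0 <= fun_kernel ab v.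
Proof. by apply: prodr_ge0 => a _; case: ifP; rewrite ?ler0n ?condB_ge0. Qed.

Lemma fun_kernel_sum1 ab : \sum_v fun_kernel ab v = 1.
Proof.
rewrite /fun_kernel -(@bigA_distr_bigA R 0 1 *%R +%R _ _
  (fun a y => if a == ab.1 then (y == ab.2)%:R else condB a y)).
by apply: big1 => a _; case: (a == ab.1); rewrite ?sum_indicator ?condB_sum1.
Qed.

Lemma PV_ge0 p : 0 <= PV p.
Proof. exact: kernel_ext_ge0 _ _ _ P_ge0 fun_kernel_ge0 p. Qed.

Lemma PV_sum1 : \sum_p PV p = 1.
Proof.
rewrite sum_pair -P_sum1; apply: eq_bigr => w _.
exact: kernel_ext_marg _ _ _ fun_kernel_sum1 w.
Qed.

Lemma PV_law {A : finType} (f : Om -> A) a : law PV (fun p => f p.1) a = law P f a.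
Proof. exact: (kernel_ext_law _ _ _ fun_kernel_sum1). Qed.

Lemma PV_entropy {A : finType} (f : Om -> A) :
  entropy PV (fun p => f p.1) = entropy P f.
Proof. exact: (kernel_ext_entropy _ _ _ fun_kernel_sum1). Qed.

Lemma PV_expect (h : Om -> R) : \sum_p PV p * h p.1 = \sum_w P w * h w.
Proof. exact: (kernel_ext_expect _ _ _ fun_kernel_sum1). Qed.

Lemma PV_supp p : PV p != 0 -> p.2 (A1 p.1, A2 p.1) = B p.1.
Proof.
case: p => w v /=; apply: contraNeq => vA_neq_B.
rewrite /PV /kernel_ext /= /fun_kernel (bigD1 (A1 w, A2 w)) //= eqxx /=.
by rewrite (negbTE vA_neq_B) mul0r mulr0.
Qed.

Lemma law_AV a v :
  law PV (fun p => ((A1 p.1, A2 p.1), p.2)) (a, v) = law_A a * law_V v.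
Proof.
rewrite /law big_mkcond sum_pair.
rewrite (eq_bigr (fun w => if (A1 w, A2 w) == a then
    P w * ((v a == B w)%:R * \prod_(a' | a' != a) condB a' (v a')) else 0));
  last first.
  move=> w _; rewrite (bigD1 v) //= big1 => [|v' /negbTE v'v]; last first.
    by rewrite xpair_eqE v'v andbF.
  rewrite addr0 xpair_eqE eqxx andbT; case: eqP => // Aw.
  rewrite /PV /kernel_ext /= /fun_kernel (bigD1 a) //= -Aw eqxx /=.
  by congr (_ * (_ * _)); apply: eq_bigr => a' /negbTE ->.
rewrite -big_mkcond /=; under eq_bigr do rewrite mulrA.
rewrite -big_distrl /=.
have -> : \sum_(w | (A1 w, A2 w) == a) P w * (v a == B w)%:R = law_AB (a, v a).
  rewrite /law_AB /law big_mkcond [RHS]big_mkcond; apply: eq_bigr => w _.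
  rewrite xpair_eqE (eq_sym (B w)).
  by case: ((A1 w, A2 w) == a); case: (v a == B w); rewrite ?mulr1 ?mulr0.
rewrite /law_V [in RHS](bigD1 a) //= mulrA; congr (_ * _).
rewrite /condB; have [law_A0|law_A_neq0] := eqVneq (law_A a) 0.
  rewrite law_A0 mul0r; apply/eqP; rewrite eq_le /law_AB law_ge0 // andbT.
  by rewrite -law_A0 law_pair_lel.
by rewrite mulrCA divff ?mulr1.
Qed.

Lemma PV_law_V v : law PV (fun p => p.2) v = law_V v.
Proof.
rewrite -(law_pairr PV (fun p => (A1 p.1, A2 p.1))).
under eq_bigr do rewrite law_AV.
by rewrite -big_distrl /= /law_A sum_law P_sum1 mul1r.
Qed.

Lemma entropy_AV : entropy PV (fun p => ((A1 p.1, A2 p.1), p.2)) =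
  entropy P (fun w => (A1 w, A2 w)) + entropy PV (fun p => p.2).
Proof.
rewrite (entropy_indep _ PV_ge0) ?(PV_entropy (fun w => (A1 w, A2 w))) //.
by move=> x v; rewrite law_AV PV_law_V (PV_law (fun w => (A1 w, A2 w))).
Qed.

Let condV := kernel_condent P fun_kernel (fun w => (A1 w, A2 w, B w)).

Lemma entropy_XAV : entropy PV (fun p => (Xv p.1, (A1 p.1, (A2 p.1, p.2)))) =
  entropy P (fun w => (Xv w, (A1 w, A2 w, B w))) + condV.
Proof.
rewrite -(kernel_ext_entropy_pair _ _ _ P_ge0 fun_kernel_ge0 fun_kernel_sum1
  (fun w => (Xv w, (A1 w, A2 w, B w))) (fun y => y.2)) //.
apply: eq_entropy => -[w v] [w' v'] /PV_supp /= vA /PV_supp /= vA'.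
apply/eqP/eqP; rewrite -vA -vA'; first by case=> -> -> -> ->.
by case=> -> -> -> _ ->.
Qed.

Lemma entropy_ABV : entropy P (fun w => (A1 w, A2 w, B w)) + condV =
  entropy P (fun w => (A1 w, A2 w)) + entropy PV (fun p => p.2).
Proof.
rewrite -(kernel_ext_entropy_pair _ _ _ P_ge0 fun_kernel_ge0 fun_kernel_sum1
  (fun w => (A1 w, A2 w, B w)) id) // -entropy_AV.
apply: eq_entropy => -[w v] [w' v'] /PV_supp /= vA /PV_supp /= vA'.
apply/eqP/eqP; rewrite -vA -vA'; first by case=> -> -> _ ->.
by case=> -> -> ->.
Qed.

Lemma PV_rate_ineq :
  mutinf PV (fun p => Xv p.1) (fun p => (A1 p.1, (A2 p.1, p.2))) +
  mutinf PV (fun p => A1 p.1) (fun p => (A2 p.1, p.2)) <=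
  mutinf P Xv (fun w => (A1 w, A2 w, B w)) + mutinf P A1 A2.
Proof.
rewrite !mutinfE //; try exact: PV_ge0.
have -> : entropy PV (fun p => (A1 p.1, (A2 p.1, p.2))) =
          entropy P (fun w => (A1 w, A2 w)) + entropy PV (fun p => p.2).
  by rewrite -entropy_AV; apply: eq_entropy => -[w v] [w' v'] _ _ /=;
    apply/eqP/eqP; case=> -> -> ->.
rewrite entropy_XAV (PV_entropy Xv) (PV_entropy A1).
have := entropy_subadd _ PV_ge0 PV_sum1 (fun p => A2 p.1) (fun p => p.2).
rewrite (PV_entropy A2); have := entropy_ABV; lra.
Qed.

Lemma EGCstar_pre_corner (pX : X -> R) (d : X -> Xh -> R) (q : 'rV[R]_5) :
  has_law P Xv pX ->
  mutinf P Xv A1 <= Defs.coord q 0 ->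
  mutinf P Xv (fun w => (A1 w, A2 w, B w)) + mutinf P A1 A2 - mutinf P Xv A1
    <= Defs.coord q 1 ->
  expect P (fun w => d (Xv w) (A1 w)) <= Defs.coord q 2 ->
  expect P (fun w => d (Xv w) (A2 w)) <= Defs.coord q 3 ->
  expect P (fun w => d (Xv w) (B w)) <= Defs.coord q 4 ->
  EGCstar_pre pX d q.
Proof.
move=> Xv_law R1 R2 D1 D2 D12.
have I_XA1 : mutinf PV (fun p => Xv p.1) (fun p => A1 p.1) = mutinf P Xv A1.
  rewrite !mutinfE ?(PV_entropy Xv) ?(PV_entropy A1) //; last exact: PV_ge0.
  by rewrite (PV_entropy (fun w => (Xv w, A1 w))).
have := mutinf_add_le _ PV_ge0 PV_sum1 (fun p => Xv p.1) (fun p => A1 p.1)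
  (fun p => (A2 p.1, p.2)).
have := PV_rate_ineq; rewrite I_XA1 => rate_ineq add_le.
exists (Om * V)%type, Xh, (Xh * V)%type, PV, (fun p => Xv p.1),
  (fun p => A1 p.1), (fun p => (A2 p.1, p.2)), id, fst,
  (fun (u1 : Xh) (u2 : Xh * V) => u2.2 (u1, u2.1)).
split.
- by split; [exact: PV_ge0 | exact: PV_sum1].
- by move=> x; exact: etrans (PV_law Xv x) (Xv_law x).
- by split; lra.
- rewrite /expect (PV_expect (fun w => d (Xv w) (A1 w))).
  rewrite (PV_expect (fun w => d (Xv w) (A2 w))); split => //.
  rewrite (eq_bigr (fun p => PV p * d (Xv p.1) (B p.1))).
    by rewrite (PV_expect (fun w => d (Xv w) (B w))).
  by move=> p _; have [->|/PV_supp /= ->] := eqVneq (PV p) 0; rewrite ?mul0r.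
Qed.

End RandomFunction.

Lemma convex_between {K : realFieldType} {V : lmodType K} (r u : V) (s t : K) :
  s <= 0 <= t ->
  exists2 mu, 0 <= mu <= 1 & r = mu *: (r + s *: u) + (1 - mu) *: (r + t *: u).
Proof.
case/andP=> s_le0 t_ge0; have [ts0|ts_neq0] := eqVneq (t - s) 0.
  have s0 : s = 0 by lra.
  exists 1; first by rewrite ler01 lexx.
  by rewrite s0 scale0r addr0 scale1r subrr scale0r addr0.
have ts_gt0 : 0 < t - s by rewrite lt0r ts_neq0 subr_ge0 (le_trans s_le0).
exists (t / (t - s)).
  by rewrite divr_ge0 ?ler_pdivrMr ?mul1r ?subr_ge0 ?(le_trans s_le0) //; lra.
rewrite !scalerDr !scalerA addrACA -!scalerDl subrKC scale1r.
suff -> : t / (t - s) * s + (1 - t / (t - s)) * t = 0 by rewrite scale0r addr0.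
by field.
Qed.

Section Regions.
Context {R : realType} {X Xh : finType} (pX : X -> R) (d : X -> Xh -> R).

Lemma EGCstar_pre_EGC_pre r : EGCstar_pre pX d r -> EGC_pre pX d r.
Proof.
case=> Om [U1 [U2 [P [Xv [X1 [X2 [phi1 [phi2 [phi12
  [[P_ge0 P_sum1] Xv_law [R1 R2 R12] D]]]]]]]]]].
exists Om, P, Xv, (fun w => phi1 (X1 w)), (fun w => phi2 (X2 w)),
  (fun w => phi12 (X1 w) (X2 w)).
split => //; split.
- exact: le_trans (mutinf_mapr_le _ P_ge0 P_sum1 _ _ _) R1.
- exact: le_trans (mutinf_mapr_le _ P_ge0 P_sum1 _ _ _) R2.
- apply: le_trans R12; apply: lerD.
  + exact: (mutinf_mapr_le _ P_ge0 P_sum1 Xv (fun w => (X1 w, X2 w))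
      (fun u => (phi1 u.1, phi2 u.2, phi12 u.1 u.2))).
  + exact: mutinf_map_le.
Qed.

Definition swap_users (q : 'rV[R]_5) : 'rV[R]_5 :=
  \row_(k < 5) Defs.coord q (nth 0 [:: 1; 0; 3; 2; 4] k)%N.

Lemma coord_swap_users q k : (k < 5)%N ->
  Defs.coord (swap_users q) k = Defs.coord q (nth 0 [:: 1; 0; 3; 2; 4] k)%N.
Proof. by move=> k_lt5; rewrite /Defs.coord mxE inordK. Qed.

Lemma swap_usersK : involutive swap_users.
Proof.
move=> q; apply/rowP => k; rewrite !mxE /Defs.coord mxE /Defs.coord.
by case: k => [[|[|[|[|[|k]]]]] k_lt5] //=; congr (q _ _); apply: val_inj;
  rewrite /= !inordK.
Qed.

Lemma EGCstar_pre_swap q : EGCstar_pre pX d q -> EGCstar_pre pX d (swap_users q).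
Proof.
case=> Om [U1 [U2 [P [Xv [X1 [X2 [phi1 [phi2 [phi12
  [[P_ge0 P_sum1] Xv_law [R1 R2 R12] [D1 D2 D12]]]]]]]]]]].
exists Om, U2, U1, P, Xv, X2, X1, phi2, phi1, (fun u2 u1 => phi12 u1 u2).
rewrite !coord_swap_users //=; split => //; split => //.
rewrite [leRHS]addrC (mutinfC _ P_ge0 X2) (eq_mutinfr _ P_ge0 Xv _
  (fun w => (X1 w, X2 w))) // => w w'.
by rewrite !xpair_eqE andbC.
Qed.

Lemma EGCstar_pre_corner2 {Om : finType} (P : Om -> R) (Xv : Om -> X)
    (A1 A2 B : Om -> Xh) (b0 : Xh) (q : 'rV[R]_5) :
  is_pmf P -> has_law P Xv pX ->
  mutinf P Xv (fun w => (A1 w, A2 w, B w)) + mutinf P A1 A2 - mutinf P Xv A2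
    <= Defs.coord q 0 ->
  mutinf P Xv A2 <= Defs.coord q 1 ->
  expect P (fun w => d (Xv w) (A1 w)) <= Defs.coord q 2 ->
  expect P (fun w => d (Xv w) (A2 w)) <= Defs.coord q 3 ->
  expect P (fun w => d (Xv w) (B w)) <= Defs.coord q 4 ->
  EGCstar_pre pX d q.
Proof.
move=> [P_ge0 P_sum1] Xv_law R1 R2 D1 D2 D12; rewrite -[q]swap_usersK.
apply/EGCstar_pre_swap/(EGCstar_pre_corner _ _ A2 A1 B b0 P_ge0 P_sum1);
  rewrite ?coord_swap_users //=.
rewrite (mutinfC _ P_ge0 A2) (eq_mutinfr _ P_ge0 Xv _
  (fun w => (A1 w, A2 w, B w))) // => w w'.
by rewrite !xpair_eqE (andbC (A2 w == _)).
Qed.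

Definition rate_transfer : 'rV[R]_5 :=
  \row_(k < 5) ((k == 0 :> nat)%:R - (k == 1 :> nat)%:R).

Lemma coord_transfer r s k : (k < 5)%N ->
  Defs.coord (r + s *: rate_transfer) k =
  Defs.coord r k + s * ((k == 0)%:R - (k == 1)%:R).
Proof. by move=> k_lt5; rewrite /Defs.coord !mxE inordK. Qed.

Lemma EGC_pre_two_corners r : EGC_pre pX d r ->
  exists mu q1 q2, [/\ 0 <= mu <= 1, EGCstar_pre pX d q1, EGCstar_pre pX d q2
    & r = mu *: q1 + (1 - mu) *: q2].
Proof.
case=> Om [P [Xv [A1 [A2 [B [[P_ge0 P_sum1] Xv_law [R1 R2 R12] [D1 D2 D12]]]]]]].
have [w0 _] : exists w0 : Om, true.
  case: (pickP (fun _ : Om => true)) => [w0|Om0]; first by exists w0.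
  by move: P_sum1; rewrite big_pred0 // => /eqP; rewrite eq_sym oner_eq0.
set s := mutinf P Xv A1 - Defs.coord r 0.
set t := Defs.coord r 1 - mutinf P Xv A2.
have [|mu mu01 ->] := convex_between r rate_transfer s t.
  by rewrite /s /t; apply/andP; split; lra.
exists mu, (r + s *: rate_transfer), (r + t *: rate_transfer); split => //.
- apply: (EGCstar_pre_corner P Xv A1 A2 B (B w0)) => //;
    rewrite !coord_transfer //= /s /t; lra.
- apply: (EGCstar_pre_corner2 P Xv A1 A2 B (B w0) _ (conj P_ge0 P_sum1)) => //;
    rewrite !coord_transfer //= /s /t; lra.
Qed.

End Regions.

Section ConvexClosure.
Context {R : realType}.
Implicit Types S : 'rV[R]_5 -> Prop.

Lemma conv_hull_sub S S' :
  (forall q, S q -> S' q) -> forall y, conv_hull S y -> conv_hull S' y.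
Proof.
move=> SS' y [n [w [v [w_ge0 w_sum1 Sv ->]]]].
by exists n, w, v; split=> // i; apply: SS'.
Qed.

Lemma conv_hull_split2 S S' :
  (forall q, S q -> exists mu q1 q2, [/\ 0 <= mu <= 1, S' q1, S' q2
     & q = mu *: q1 + (1 - mu) *: q2]) ->
  forall y, conv_hull S y -> conv_hull S' y.
Proof.
move=> split2 y [n [w [v [w_ge0 w_sum1 Sv ->]]]].
have /fin_all_exists [mq vP] : forall i, exists mq : R * 'rV[R]_5 * 'rV[R]_5,
    [/\ 0 <= mq.1.1 <= 1, S' mq.1.2, S' mq.2
      & v i = mq.1.1 *: mq.1.2 + (1 - mq.1.1) *: mq.2].
  by move=> i; have [mu [q1 [q2 ?]]] := split2 _ (Sv i); exists (mu, q1, q2).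
exists (n + n)%N,
  (fun k => match split k with inl i => w i * (mq i).1.1
                             | inr i => w i * (1 - (mq i).1.1) end),
  (fun k => match split k with inl i => (mq i).1.2 | inr i => (mq i).2 end).
split.
- move=> k; case: (split k) => i; have [/andP[mu_ge0 mu_le1] _ _ _] := vP i;
    by rewrite mulr_ge0 ?subr_ge0.
- rewrite big_split_ord /= -[RHS]w_sum1 -big_split /=; apply: eq_bigr => i _.
  by rewrite (unsplitK (inl _ i)) (unsplitK (inr _ i)); ring.
- by move=> k; case: (split k) => i; have [] := vP i.
- rewrite big_split_ord /= -big_split /=; apply: eq_bigr => i _.
  rewrite (unsplitK (inl _ i)) (unsplitK (inr _ i)).
  by have [_ _ _ ->] := vP i; rewrite scalerDr !scalerA.
Qed.

Lemma conv_closure_sub S S' :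
  (forall y, conv_hull S y -> conv_hull S' y) ->
  forall r, conv_closure S r -> conv_closure S' r.
Proof.
move=> SS' r Sr eps eps_gt0; have [y [Sy r_near]] := Sr eps eps_gt0.
by exists y; split => //; apply: SS'.
Qed.

End ConvexClosure.

Theorem theorem1 (R : realType) (X Xh : finType) (pX : X -> R)
  (d : X -> Xh -> R) (hpX : is_pmf pX) (hd : forall x y, 0 <= d x y) :
  forall r : 'rV[R]_5, RD_EGCstar pX d r <-> RD_EGC pX d r.
Proof.
move=> r; split; apply: conv_closure_sub.
  by apply: conv_hull_sub; apply: EGCstar_pre_EGC_pre.
by apply: conv_hull_split2; apply: EGC_pre_two_corners.
Qed.
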